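(* Suppose that we have an online algorithm that solves the $(\gamma,C)$-bounded online factorization problem for a real $m\times N$ matrix $Q$ with rows $q_1,\ldots,q_m$, for some fixed $C$ and every $\gamma>0$. Then, for any $c>0$, there is an online factorization algorithm for $Q$ in the row arrival model with factorization value $O\left(C\gamma_2(Q)\log(\gamma_2(Q)/\|q_1\|_\infty)^{\frac12+c}\right)$. Moreover, there is an online factorization algorithm for $Q^T$ in the column arrival model with factorization value $O(C\gamma_2(Q))$.
   Context: For a matrix, $\|R\|_{1\to2}$ is the maximum $\ell_2$ norm of a column, $\|L\|_{2\to\infty}$ the maximum $\ell_2$ norm of a row, and $\gamma_2(A)=\min\{\|L\|_{2\to\infty}\|R\|_{1\to2}:LR=A\}$; $\gamma_2(A)=\gamma_2(A^T)$. $Q_t$ is the submatrix of the first $t$ rows of $Q$. The $(\gamma,C)$-bounded online factorization problem: the algorithm receives $\gamma,C$ at time $0$ and chooses an initial (possibly empty) matrix $R_0$ with $N$ columns; at each time $t\ge1$ it receives row $q_t$ and must either (i) form $R_t$ by appending rows to $R_{t-1}$ and output a row $\ell_t$ with $\ell_tR_t=q_t$, such that $\|R_t\|_{1\to2}\le1$ and $\|L_t\|_{2\to\infty}\le C\gamma$ (where $L_t$ has rows $\ell_1,\ldots,\ell_t$ zero-padded), or (ii) (correctly) assert $\gamma_2(Q_t)>\gamma$. Row arrival model: rows arrive online (their number unknown); the algorithm chooses $R_0$, and at step $t$ appends rows to $R_{t-1}$ to get $R_t$ and outputs $\ell_t$ with $\ell_tR_t=q_t$, with $\|R_t\|_{1\to2}\le1$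 always; its factorization value is $\max_t\|\ell_t\|_2$. Column arrival model: the columns $a_1,a_2,\ldots$ arrive online; the algorithm chooses $L_0$, at step $t$ appends columns to $L_{t-1}$ to get $L_t$ and outputs a column $r_t$ with $L_tr_t=a_t$, $\|r_t\|_2\le1$; its factorization value is $\|L_N\|_{2\to\infty}$ for the final $L_N$. *)

From mathcomp Require Import all_boot all_order all_algebra.
From mathcomp Require Import all_classical all_reals all_analysis.
Set Implicit Arguments. Unset Strict Implicit. Unset Printing Implicit Defensive.
Import Order.TTheory GRing.Theory Num.Theory.
Local Open Scope ring_scope.

Section OnlineFactorization.
Variable R : realType.

Definition vnorm2 {N} (v : 'rV[R]_N) : R := Num.sqrt (\sum_(j < N) v 0 j ^+ 2).
Definition seqnorm2 (l : seq R) : R := Num.sqrt (\sum_(x <- l) x ^+ 2).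
Definition vnorminf {N} (v : 'rV[R]_N) : R := \big[Num.max/0]_(j < N) `|v 0 j|.

Definition norm_2inf {m k} (L : 'M[R]_(m, k)) : R :=
  \big[Num.max/0]_(i < m) vnorm2 (row i L).
Definition norm_12 {k N} (M : 'M[R]_(k, N)) : R :=
  \big[Num.max/0]_(j < N) vnorm2 ((col j M)^T).

Definition gamma2 {m N} (A : 'M[R]_(m, N)) : R :=
  inf [set x : R | exists (k : nat) (L : 'M[R]_(m, k)) (M : 'M[R]_(k, N)),
                     L *m M = A /\ x = norm_2inf L * norm_12 M].

Definition rows_of {m N} (Q : 'M[R]_(m, N)) : seq 'rV[R]_N :=
  [seq row i Q | i <- enum 'I_m].
Definition cols_of {N m} (A : 'M[R]_(N, m)) : seq 'cV[R]_N :=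
  [seq col i A | i <- enum 'I_m].
Definition mx_of_rows {N} (s : seq 'rV[R]_N) : 'M[R]_(size s, N) :=
  \matrix_(i < size s, j < N) (nth 0 s i) 0 j.

Definition colnorm_rows {N} (Rs : seq 'rV[R]_N) : R :=
  \big[Num.max/0]_(j < N) Num.sqrt (\sum_(r <- Rs) r 0 j ^+ 2).
Definition lincomb_rows {N} (l : seq R) (Rs : seq 'rV[R]_N) : 'rV[R]_N :=
  \sum_(i < size Rs) nth 0 l i *: nth 0 Rs i.
Definition rownorm_cols {N} (Ls : seq 'cV[R]_N) : R :=
  \big[Num.max/0]_(j < N) Num.sqrt (\sum_(c <- Ls) c j 0 ^+ 2).
Definition lincomb_cols {N} (r : seq R) (Ls : seq 'cV[R]_N) : 'cV[R]_N :=
  \sum_(i < size Ls) nth 0 r i *: nth 0 Ls i.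

(* A deterministic online algorithm: at time 0 it sees (gamma, C) and picks
   R_0; at time t it sees (gamma, C) and q_1..q_t and either asserts
   (None) or returns Some (rows appended to R_{t-1}, l_t). *)
Record bofa (N : nat) := BOFA {
  bofa_init : R -> R -> seq 'rV[R]_N ;
  bofa_step : R -> R -> seq 'rV[R]_N -> option (seq 'rV[R]_N * seq R) }.

Definition bofa_out {N} (A : bofa N) g C (h : seq 'rV[R]_N) (s : nat) :=
  odflt ([::], [::]) (bofa_step A g C (take s h)).

Definition bofa_R {N} (A : bofa N) g C (h : seq 'rV[R]_N) (t : nat) :=
  bofa_init A g C ++ flatten [seq (bofa_out A g C h s).1 | s <- iota 1 t].

Definition bofa_solves {N} (A : bofa N) (g C : R) {m} (Q : 'M[R]_(m, N)) : Prop :=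
  let h := rows_of Q in
  forall t : nat, (1 <= t <= m)%N ->
    (forall s : nat, (1 <= s < t)%N -> isSome (bofa_step A g C (take s h))) ->
    match bofa_step A g C (take t h) with
    | None => gamma2 (mx_of_rows (take t h)) > g
    | Some (_, l) =>
        [/\ size l = size (bofa_R A g C h t),
            lincomb_rows l (bofa_R A g C h t) = nth 0 h t.-1,
            colnorm_rows (bofa_R A g C h t) <= 1 &
            forall s : nat, (1 <= s <= t)%N ->
              seqnorm2 (bofa_out A g C h s).2 <= C * g]
    end.

Record rowalg (N : nat) := RowAlg {
  ra_init : seq 'rV[R]_N ;
  ra_step : seq 'rV[R]_N -> seq 'rV[R]_N * seq R }.

Definition ra_R {N} (B : rowalg N) (h : seq 'rV[R]_N) (t : nat) :=
  ra_init B ++ flatten [seq (ra_step B (take s h)).1 | s <- iota 1 t].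

Definition ra_valid {N} (B : rowalg N) {m} (Q : 'M[R]_(m, N)) : Prop :=
  let h := rows_of Q in
  forall t : nat, (1 <= t <= m)%N ->
    [/\ size (ra_step B (take t h)).2 = size (ra_R B h t),
        lincomb_rows (ra_step B (take t h)).2 (ra_R B h t) = nth 0 h t.-1 &
        colnorm_rows (ra_R B h t) <= 1].

Definition ra_value {N} (B : rowalg N) {m} (Q : 'M[R]_(m, N)) : R :=
  \big[Num.max/0]_(t < m) seqnorm2 (ra_step B (take t.+1 (rows_of Q))).2.

Record colalg (N : nat) := ColAlg {
  ca_init : seq 'cV[R]_N ;
  ca_step : seq 'cV[R]_N -> seq 'cV[R]_N * seq R }.

Definition ca_L {N} (B : colalg N) (h : seq 'cV[R]_N) (t : nat) :=
  ca_init B ++ flatten [seq (ca_step B (take s h)).1 | s <- iota 1 t].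

Definition ca_valid {N} (B : colalg N) {m} (A : 'M[R]_(N, m)) : Prop :=
  let h := cols_of A in
  forall t : nat, (1 <= t <= m)%N ->
    [/\ size (ca_step B (take t h)).2 = size (ca_L B h t),
        lincomb_cols (ca_step B (take t h)).2 (ca_L B h t) = nth 0 h t.-1 &
        seqnorm2 (ca_step B (take t h)).2 <= 1].

Definition ca_value {N} (B : colalg N) {m} (A : 'M[R]_(N, m)) : R :=
  rownorm_cols (ca_L B (cols_of A) m).

End OnlineFactorization.

From mathcomp Require Import all_boot all_order all_algebra.
From mathcomp Require Import all_classical all_reals all_analysis.
From mathcomp Require Import ring lra.
Import Order.TTheory GRing.Theory Num.Theory.
Local Open Scope ring_scope.

Set Implicit Arguments.
Unset Strict Implicit.
Unset Printing Implicit Defensive.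

(* The doubling trick.  Run the bounded algorithm with a guess lev for gamma, and
   whenever gamma_2(Q_t) exceeds lev restart it with lev := 2 gamma_2(Q_t), opening a
   new phase n.  Rows already in R are kept; the rows of the restarted run, scaled by
   a phase weight sigma_n, are appended, and q_t is expressed with coefficients
   l_t / sigma_n on the rows of the current phase.  The columns of the stacked R then
   have squared norm at most sum_n sigma_n^2, each coefficient vector has norm at
   most C lev / sigma_n with lev <= 2 gamma_2(Q), and since the entries of q_1 are
   bounded by gamma_2(Q_1) there are at most log2(4 gamma_2(Q) / ||q_1||_oo) phases.
   For row arrival take sigma_n^2 = n^-a - (n+1)^-a with a = 2c: the sum telescopes
   below 1 while 1/sigma_n = O(n^(1/2 + c)).  For column arrival take sigma_n = C lev:
   every coefficient vector is then a unit vector, and as lev at least doubles at each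
   restart, sum_n sigma_n^2 <= 4/3 (C lev)^2. *)

Section Gamma2.
Variable R : realType.

Lemma cauchy_schwarz_sum k (a b : 'I_k -> R) :
  (\sum_i a i * b i) ^+ 2 <= (\sum_i a i ^+ 2) * (\sum_i b i ^+ 2).
Proof.
have lagrange : \sum_i \sum_j (a i * b j - a j * b i) ^+ 2 =
    2 * ((\sum_i a i ^+ 2) * (\sum_i b i ^+ 2) - (\sum_i a i * b i) ^+ 2).
  have -> : \sum_i \sum_j (a i * b j - a j * b i) ^+ 2 =
      \sum_i \sum_j a i ^+ 2 * b j ^+ 2 + \sum_i \sum_j a j ^+ 2 * b i ^+ 2
      - 2 * \sum_i \sum_j a i * b i * (a j * b j).
    rewrite mulr_sumr -big_split -sumrB /=; apply: eq_bigr => i _.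
    rewrite mulr_sumr -big_split -sumrB /=; apply: eq_bigr => j _; ring.
  have sum_sqr_mul : (\sum_i a i ^+ 2) * (\sum_i b i ^+ 2) =
      \sum_i \sum_j a i ^+ 2 * b j ^+ 2.
    by rewrite mulr_suml; apply: eq_bigr => i _; rewrite mulr_sumr.
  have sqr_sum_mul : (\sum_i a i * b i) ^+ 2 = \sum_i \sum_j a i * b i * (a j * b j).
    by rewrite expr2 mulr_suml; apply: eq_bigr => i _; rewrite mulr_sumr.
  rewrite [in X in _ + X - _]exchange_big /= sum_sqr_mul sqr_sum_mul; ring.
have : 0 <= \sum_i \sum_j (a i * b j - a j * b i) ^+ 2.
  by do 2 (apply: sumr_ge0 => ? _); exact: sqr_ge0.
rewrite lagrange; lra.
Qed.

Lemma norm_2inf_ge0 m k (L : 'M[R]_(m, k)) : 0 <= norm_2inf L.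
Proof. exact: bigmax_ge_id. Qed.

Lemma norm_12_ge0 k N (M : 'M[R]_(k, N)) : 0 <= norm_12 M.
Proof. exact: bigmax_ge_id. Qed.

Definition factorization_values m N (A : 'M[R]_(m, N)) : set R :=
  [set x : R | exists (k : nat) (L : 'M[R]_(m, k)) (M : 'M[R]_(k, N)),
                 L *m M = A /\ x = norm_2inf L * norm_12 M].

Lemma factorization_values_neq0 m N (A : 'M[R]_(m, N)) :
  (factorization_values A !=set0)%classic.
Proof. by exists (norm_2inf A * norm_12 (1%:M : 'M[R]_N)), N, A, 1%:M; rewrite mulmx1. Qed.

Lemma factorization_values_ge0 m N (A : 'M[R]_(m, N)) :
  lbound (factorization_values A) 0.
Proof. by move=> x [k [L [M [_ ->]]]]; rewrite mulr_ge0 ?norm_2inf_ge0 ?norm_12_ge0. Qed.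

Lemma gamma2_ge0 m N (A : 'M[R]_(m, N)) : 0 <= gamma2 A.
Proof. exact: lb_le_inf (factorization_values_neq0 A) (@factorization_values_ge0 m N A). Qed.

Lemma gamma2_mulmx_le m k N (L : 'M[R]_(m, k)) (M : 'M[R]_(k, N)) :
  gamma2 (L *m M) <= norm_2inf L * norm_12 M.
Proof.
apply: (ge_inf (E := factorization_values (L *m M))); last by exists k, L, M.
by exists 0; exact: factorization_values_ge0.
Qed.

Lemma gamma2_ge_entry m N (A : 'M[R]_(m, N)) i j : `|A i j| <= gamma2 A.
Proof.
rewrite /gamma2; apply: (lb_le_inf (factorization_values_neq0 A)) => x [k [L [M [<- ->]]]].
have rowL : Num.sqrt (\sum_l L i l ^+ 2) <= norm_2inf L.
  have -> : \sum_l L i l ^+ 2 = \sum_l row i L 0 l ^+ 2.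
    by apply: eq_bigr => l _; rewrite mxE.
  exact: le_bigmax.
have colM : Num.sqrt (\sum_l M l j ^+ 2) <= norm_12 M.
  have -> : \sum_l M l j ^+ 2 = \sum_l (col j M)^T 0 l ^+ 2.
    by apply: eq_bigr => l _; rewrite !mxE.
  exact: le_bigmax.
apply: le_trans (ler_pM _ _ rowL colM); rewrite ?sqrtr_ge0 // mxE.
have sumsq_ge0 (v : 'I_k -> R) : 0 <= \sum_l v l ^+ 2 by apply: sumr_ge0 => l _; exact: sqr_ge0.
rewrite -sqrtrM // -sqrtr_sqr ler_sqrt ?mulr_ge0 //; exact: cauchy_schwarz_sum.
Qed.

Lemma gamma2_rowsub_le m m' N (f : 'I_m' -> 'I_m) (A : 'M[R]_(m, N)) :
  gamma2 (rowsub f A) <= gamma2 A.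
Proof.
rewrite /gamma2; apply: (lb_le_inf (factorization_values_neq0 A)) => x [k [L [M [<- ->]]]].
rewrite -mul_rowsub_mx; apply: le_trans (gamma2_mulmx_le _ _) _.
rewrite ler_wpM2r ?norm_12_ge0 //; apply: bigmax_le => [|i _].
  exact: norm_2inf_ge0.
by rewrite row_rowsub; exact: le_bigmax.
Qed.

Lemma gamma2_0 m N : gamma2 (0 : 'M[R]_(m, N)) = 0.
Proof.
apply/le_anti; rewrite gamma2_ge0 andbT.
have -> : 0 = (0 : 'M[R]_(m, 0)) *m (0 : 'M[R]_(0, N)) by rewrite mul0mx.
apply: le_trans (gamma2_mulmx_le _ _) _.
suff -> : norm_2inf (0 : 'M[R]_(m, 0)) = 0 by rewrite mul0r.
apply/le_anti; rewrite norm_2inf_ge0 andbT; apply: bigmax_le => // i _.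
by rewrite /vnorm2 big_ord0 sqrtr0.
Qed.

Lemma size_rows_of m N (Q : 'M[R]_(m, N)) : size (rows_of Q) = m.
Proof. by rewrite size_map size_enum_ord. Qed.

Lemma nth_rows_of m N (Q : 'M[R]_(m, N)) (i : 'I_m) : nth 0 (rows_of Q) i = row i Q.
Proof. by rewrite (nth_map i) ?size_enum_ord // nth_ord_enum. Qed.

Lemma gamma2_take_rows_of_le m N (Q : 'M[R]_(m, N)) s :
  gamma2 (mx_of_rows (take s (rows_of Q))) <= gamma2 Q.
Proof.
have le_m : (size (take s (rows_of Q)) <= m)%N.
  by rewrite size_take_min size_rows_of geq_minr.
pose f i := Ordinal (leq_trans (ltn_ord i) le_m).
suff -> : mx_of_rows (take s (rows_of Q)) = rowsub f Q by exact: gamma2_rowsub_le.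
apply/matrixP => i j; have i_s : (i < s)%N.
  by have := ltn_ord i; rewrite [X in (_ < X)%N]size_take_min leq_min => /andP[].
by rewrite !mxE nth_take // (nth_rows_of Q (f i)) mxE.
Qed.

Lemma gamma2_mx_of_rows_ge_entry N (p : seq 'rV[R]_N) i j : (i < size p)%N ->
  `|nth 0 p i 0 j| <= gamma2 (mx_of_rows p).
Proof. by move=> ip; have := gamma2_ge_entry (mx_of_rows p) (Ordinal ip) j; rewrite mxE. Qed.

End Gamma2.

Section PhaseWeights.
Variable R : realType.
Implicit Types (a : R) (n : nat).

(* [n ^- a] for [n > 0]; at [n = 0] it is [1] since [ln 0 = 0]. *)
Definition decay a n : R := expR (- a * ln n%:R).

Definition phase_weight a n : R := Num.sqrt (decay a n - decay a n.+1).

Lemma decay_gt0 a n : 0 < decay a n.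
Proof. exact: expR_gt0. Qed.

Lemma decayS_le a n : 0 <= a -> decay a n.+1 <= decay a n.
Proof.
move=> a_ge0; rewrite ler_expR !mulNr lerN2 ler_wpM2l //.
case: n => [|n]; first by rewrite (@ln0 _ 0%:R) // ln1.
by rewrite ler_ln ?posrE ?ltr0n // ler_nat.
Qed.

Lemma phase_weight_sqr a n : 0 <= a -> phase_weight a n ^+ 2 = decay a n - decay a n.+1.
Proof. by move=> a_ge0; rewrite sqr_sqrtr // subr_ge0 decayS_le. Qed.

Lemma invS_le_ln_diff n : (0 < n)%N -> n.+1%:R^-1 <= ln n.+1%:R - ln n%:R :> R.
Proof.
move=> n_gt0; have n1_gt0 : (0 : R) < n.+1%:R by rewrite ltr0n.
have : ln (1 - n.+1%:R^-1) <= - n.+1%:R^-1 :> R.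
  by apply: le_ln1Dx; rewrite ltrN2 invf_lt1 // ltr1n.
have -> : 1 - n.+1%:R^-1 = n%:R / n.+1%:R :> R.
  by rewrite -natr1; field; rewrite natr1 gt_eqF.
by rewrite ln_div ?posrE ?ltr0n // => ln_le; rewrite -lerN2 opprB.
Qed.

Lemma phase_weight_sqr_ge a n : 0 <= a -> (0 < n)%N ->
  a * decay (1 + a) n.+1 <= phase_weight a n ^+ 2.
Proof.
move=> a_ge0 n_gt0; rewrite phase_weight_sqr //.
have n1_gt0 : (0 : R) < n.+1%:R by rewrite ltr0n.
set y := a * (ln n.+1%:R - ln n%:R).
have y_ge : a / n.+1%:R <= y by rewrite /y ler_wpM2l ?invS_le_ln_diff.
have decay_n : decay a n = decay a n.+1 * expR y by rewrite /decay -expRD /y; congr expR; ring.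
have decay_1a : decay (1 + a) n.+1 = decay a n.+1 / n.+1%:R.
  have inv_n1 : n.+1%:R^-1 = expR (- ln n.+1%:R) :> R by rewrite expRN lnK.
  by rewrite inv_n1 /decay -expRD; congr expR; ring.
have d_gt0 : 0 < decay a n.+1 := expR_gt0 _.
rewrite decay_1a decay_n; have := expR_ge1Dx y.
(* [decay a n = d expR y] with [expR y >= 1 + y] and [y >= a / (n + 1)]. *)
set d := decay a n.+1 in d_gt0 *; set u := a / n.+1%:R in y_ge *.
have -> : a * (d / n.+1%:R) = d * u by rewrite /u; ring.
move=> exp_ge; nra.
Qed.

Lemma phase_weight_gt0 a n : 0 < a -> (0 < n)%N -> 0 < phase_weight a n.
Proof.
move=> a_gt0 n_gt0; rewrite sqrtr_gt0 -phase_weight_sqr ?ltW //.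
by apply: lt_le_trans (phase_weight_sqr_ge (ltW a_gt0) n_gt0); rewrite mulr_gt0 ?decay_gt0.
Qed.

Lemma inv_phase_weight_le a n : 0 < a -> (0 < n)%N ->
  (phase_weight a n)^-1 <= (Num.sqrt a)^-1 * n.+1%:R `^ ((1 + a) / 2).
Proof.
move=> a_gt0 n_gt0; have w2_ge := phase_weight_sqr_ge (ltW a_gt0) n_gt0.
set E := n.+1%:R `^ ((1 + a) / 2).
have E_gt0 : 0 < E by rewrite powR_gt0 // ltr0n.
have decay_E : decay (1 + a) n.+1 = (E ^+ 2)^-1.
  rewrite /E /powR pnatr_eq0 /= -expRM_natr -expRN /decay.
  by congr expR; field.
have w_ge : Num.sqrt a / E <= phase_weight a n.
  rewrite -ler_sqr ?nnegrE ?sqrtr_ge0 ?divr_ge0 ?(ltW E_gt0) //.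
  by rewrite expr_div_n sqr_sqrtr ?(ltW a_gt0) // -decay_E.
rewrite mulrC -invf_div lef_pV2 ?posrE //; last by rewrite divr_gt0 ?sqrtr_gt0.
by apply: lt_le_trans w_ge; rewrite divr_gt0 ?sqrtr_gt0.
Qed.

Lemma phase_count_le n (X : R) : 0 < X -> 2 ^+ n <= 4 * X ->
  n.+1%:R <= (3 + (ln 2)^-1) * Num.max 1 (ln X).
Proof.
move=> X_gt0 pow2_le; have ln2_gt0 : (0 : R) < ln 2 by rewrite ln_gt0 // ltr1n.
set M := Num.max 1 (ln X).
have M_ge1 : 1 <= M by rewrite le_max lexx.
have lnX_le : ln X <= M by rewrite le_max lexx orbT.
have : n%:R * ln 2 <= 2 * ln 2 + ln X.
  have ln4 : ln 4 = ln 2 *+ 2 :> R by rewrite -lnXn // -natrX.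
  have : ln (2 ^+ n) <= ln (4 * X) :> R by rewrite ler_ln ?posrE ?exprn_gt0 ?mulr_gt0.
  by rewrite lnXn // lnM ?posrE // ln4 -[ln 2 *+ n]mulr_natl -[ln 2 *+ 2]mulr_natl.
have -> : (3 + (ln 2)^-1) * M = (3 * M * ln 2 + M) / ln 2 by field; rewrite gt_eqF.
rewrite ler_pdivlMr // -natr1; nra.
Qed.

Lemma inv_phase_weight_le_log c n (X : R) : 0 < c -> (0 < n)%N -> 0 < X -> 2 ^+ n <= 4 * X ->
  (phase_weight (2 * c) n)^-1 <=
  (Num.sqrt (2 * c))^-1 * (3 + (ln 2)^-1) `^ (2^-1 + c) * Num.max 1 (ln X) `^ (2^-1 + c).
Proof.
move=> c_gt0 n_gt0 X_gt0 pow2_le.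
have -> : 2^-1 + c = (1 + 2 * c) / 2 by field.
apply: le_trans (inv_phase_weight_le _ n_gt0) _; first by rewrite mulr_gt0.
rewrite -mulrA ler_wpM2l ?invr_ge0 ?sqrtr_ge0 //.
have b_ge0 : (0 : R) <= 3 + (ln 2)^-1 by rewrite addr_ge0 ?invr_ge0 ?ln_ge0 ?ler1n.
have M_ge0 : 0 <= Num.max 1 (ln X) by rewrite le_max ler01.
rewrite -powRM //; apply: ge0_ler_powR; rewrite ?nnegrE ?mulr_ge0 //.
  by rewrite addr_ge0 // mulr_ge0 // ltW.
exact: phase_count_le.
Qed.

End PhaseWeights.

Section RowLists.
Variables (R : realType) (N : nat).
Implicit Types (P Rs : seq 'rV[R]_N) (l : seq R).

Definition colsq Rs (j : 'I_N) : R := \sum_(r <- Rs) r 0 j ^+ 2.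

Lemma colsq_cat_scale P Rs s j :
  colsq (P ++ map ( *:%R s) Rs) j = colsq P j + s ^+ 2 * colsq Rs j.
Proof.
rewrite /colsq big_cat big_map mulr_sumr; congr (_ + _).
by apply: eq_bigr => r _; rewrite mxE exprMn.
Qed.

Lemma colsq_le1 Rs j : colnorm_rows Rs <= 1 -> colsq Rs j <= 1.
Proof.
move=> /(le_trans (le_bigmax _ _ j)).
by rewrite -[X in _ <= X -> _]sqrtr1 ler_sqrt.
Qed.

Lemma colsq_cat_scale_le P Rs s W j : colsq P j <= W - s ^+ 2 -> colnorm_rows Rs <= 1 ->
  colsq (P ++ map ( *:%R s) Rs) j <= W.
Proof.
move=> P_le /(colsq_le1 j) Rs_le1; rewrite colsq_cat_scale.
have : s ^+ 2 * colsq Rs j <= s ^+ 2 by rewrite ler_piMr ?sqr_ge0.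
lra.
Qed.

Lemma colnorm_rows_le Rs S : 0 <= S -> (forall j, colsq Rs j <= S) ->
  colnorm_rows Rs <= Num.sqrt S.
Proof.
move=> S_ge0 colsq_le; apply: bigmax_le => [|j _]; first exact: sqrtr_ge0.
by rewrite ler_sqrt //; exact: colsq_le.
Qed.

Lemma lincomb_rows_nil l : lincomb_rows l ([::] : seq 'rV[R]_N) = 0.
Proof. by rewrite /lincomb_rows big_ord0. Qed.

Lemma lincomb_rows_nseq0 P Rs l :
  lincomb_rows (nseq (size P) 0 ++ l) (P ++ Rs) = lincomb_rows l Rs.
Proof.
elim: P => //= r P IH.
by rewrite -IH /lincomb_rows /= big_ord_recl /= scale0r add0r.
Qed.

Lemma lincomb_rows_scale Rs l s : s != 0 -> size l = size Rs ->
  lincomb_rows [seq x / s | x <- l] (map ( *:%R s) Rs) = lincomb_rows l Rs.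
Proof.
move=> s_neq0 size_l; rewrite /lincomb_rows size_map; apply: eq_bigr => i _.
by rewrite (nth_map 0) ?size_l // (nth_map 0) //= scalerA mulfVK.
Qed.

Lemma seqnorm2_ge0 l : 0 <= seqnorm2 l.
Proof. exact: sqrtr_ge0. Qed.

Lemma seqnorm2_nseq0_div k l s : 0 < s ->
  seqnorm2 (nseq k 0 ++ [seq x / s | x <- l]) = seqnorm2 l / s.
Proof.
move=> s_gt0; rewrite /seqnorm2 big_cat big_map big_nseq /= iter_addr_0 expr0n mul0rn add0r.
have -> : \sum_(x <- l) (x / s) ^+ 2 = (\sum_(x <- l) x ^+ 2) / s ^+ 2.
  by rewrite mulr_suml; apply: eq_bigr => x _; rewrite expr_div_n.
rewrite sqrtrM ?sumr_ge0 // => [|x _]; last exact: sqr_ge0.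
by rewrite sqrtrV ?exprn_ge0 ?(ltW s_gt0) // sqrtr_sqr gtr0_norm.
Qed.

Lemma lincomb_rows_seqnorm2_le0 l Rs : seqnorm2 l <= 0 -> lincomb_rows l Rs = 0.
Proof.
move=> l_le0; have sumsq_ge0 : 0 <= \sum_(x <- l) x ^+ 2.
  by apply: sumr_ge0 => x _; exact: sqr_ge0.
have : \sum_(x <- l) x ^+ 2 == 0.
  by rewrite eq_le sumsq_ge0 andbT -sqrtr_eq0 eq_le l_le0 seqnorm2_ge0.
rewrite psumr_eq0 => [/allP l_eq0|x _]; last exact: sqr_ge0.
rewrite /lincomb_rows big1 // => i _; have [il|li] := ltnP i (size l).
  by have /implyP/(_ isT) := l_eq0 _ (mem_nth 0 il); rewrite sqrf_eq0 => /eqP ->; rewrite scale0r.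
by rewrite nth_default ?scale0r.
Qed.

Lemma lincomb_cols_map_trmx l Rs :
  lincomb_cols l (map trmx Rs) = (lincomb_rows l Rs)^T.
Proof.
apply/matrixP => i j; rewrite /lincomb_cols /lincomb_rows !mxE size_map !summxE.
by apply: eq_bigr => k _; rewrite !mxE (nth_map 0) ?mxE.
Qed.

Lemma rownorm_cols_map_trmx Rs : rownorm_cols (map trmx Rs) = colnorm_rows Rs.
Proof.
apply: eq_bigr => j _; rewrite big_map.
by congr Num.sqrt; apply: eq_bigr => r _; rewrite mxE.
Qed.

Lemma cols_of_trmx m (Q : 'M[R]_(m, N)) : cols_of Q^T = map trmx (rows_of Q).
Proof. by rewrite /cols_of /rows_of -map_comp; apply: eq_map => i /=; rewrite tr_row. Qed.

End RowLists.

Section Doubling.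
Variables (R : realType) (N : nat) (A : bofa R N) (C : R) (weight : nat -> R -> R).
Implicit Types (h : seq 'rV[R]_N) (s t : nat).

Definition prefix_gamma2 h t := gamma2 (mx_of_rows (take t h)).

Fixpoint level h t : R :=
  if t is t'.+1 then
    if level h t' < prefix_gamma2 h t then 2 * prefix_gamma2 h t else level h t'
  else 0.

Definition restart h t := level h t.-1 < prefix_gamma2 h t.
Arguments restart : simpl never.

Lemma levelS h t :
  level h t.+1 = if restart h t.+1 then 2 * prefix_gamma2 h t.+1 else level h t.
Proof. by []. Qed.

Fixpoint phase h t : nat := if t is t'.+1 then phase h t' + restart h t else 0.

Lemma phaseS h t : phase h t.+1 = (phase h t + restart h t.+1)%N.
Proof. by []. Qed.

Definition scale h t := weight (phase h t) (level h t).

Fixpoint weight_sqsum h t : R :=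
  if t is t'.+1 then weight_sqsum h t' + (if restart h t then scale h t ^+ 2 else 0)
  else 0.

Lemma weight_sqsumS h t :
  weight_sqsum h t.+1 = weight_sqsum h t + (if restart h t.+1 then scale h t.+1 ^+ 2 else 0).
Proof. by []. Qed.

Definition run_rows h t := bofa_R A (level h t) C h t.
Definition run_out h t := bofa_out A (level h t) C h t.

(* Restarting the deterministic algorithm with a new guess at time t amounts to
   replaying it on q_1, ..., q_t, so all the rows it would have produced so far
   are appended at once. *)
Definition new_rows h t : seq 'rV[R]_N :=
  if level h t == 0 then [::]
  else map ( *:%R (scale h t)) (if restart h t then run_rows h t else (run_out h t).1).

Definition stacked h t := flatten [seq new_rows h s | s <- iota 1 t].

Definition coefs h t : seq R :=
  if level h t == 0 then [::]
  else nseq (size (stacked h t) - size (run_rows h t)) 0 ++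
       [seq x / scale h t | x <- (run_out h t).2].

Section Prefix.
Variables (h : seq 'rV[R]_N) (t : nat).

Lemma prefix_gamma2_take s : (s <= t)%N -> prefix_gamma2 (take t h) s = prefix_gamma2 h s.
Proof. by move=> st; rewrite /prefix_gamma2 take_takel. Qed.

Lemma level_take s : (s <= t)%N -> level (take t h) s = level h s.
Proof. by elim: s => [|s IH] st //=; rewrite prefix_gamma2_take // IH // ltnW. Qed.

Lemma restart_take s : (s <= t)%N -> restart (take t h) s = restart h s.
Proof.
by move=> st; rewrite /restart prefix_gamma2_take // level_take // (leq_trans (leq_pred s)).
Qed.

Lemma phase_take s : (s <= t)%N -> phase (take t h) s = phase h s.
Proof. by elim: s => [|s IH] st //=; rewrite restart_take // IH // ltnW. Qed.

Lemma scale_take s : (s <= t)%N -> scale (take t h) s = scale h s.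
Proof. by move=> st; rewrite /scale phase_take // level_take. Qed.

Lemma bofa_out_take g s : (s <= t)%N -> bofa_out A g C (take t h) s = bofa_out A g C h s.
Proof. by move=> st; rewrite /bofa_out take_takel. Qed.

Lemma bofa_R_take g s : (s <= t)%N -> bofa_R A g C (take t h) s = bofa_R A g C h s.
Proof.
move=> st; rewrite /bofa_R; congr (_ ++ flatten _); apply/eq_in_map => u.
by rewrite mem_iota add1n ltnS => /andP[_ us]; rewrite bofa_out_take // (leq_trans us).
Qed.

Lemma new_rows_take s : (s <= t)%N -> new_rows (take t h) s = new_rows h s.
Proof.
move=> st; rewrite /new_rows /run_rows /run_out level_take // restart_take //.
by rewrite scale_take // bofa_R_take // bofa_out_take.
Qed.

Lemma stacked_take s : (s <= t)%N -> stacked (take t h) s = stacked h s.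
Proof.
move=> st; rewrite /stacked; congr flatten; apply/eq_in_map => u.
by rewrite mem_iota add1n ltnS => /andP[_ us]; rewrite new_rows_take // (leq_trans us).
Qed.

Lemma coefs_take s : (s <= t)%N -> coefs (take t h) s = coefs h s.
Proof.
move=> st; rewrite /coefs /run_rows /run_out level_take // stacked_take //.
by rewrite bofa_R_take // bofa_out_take // scale_take.
Qed.

End Prefix.

Lemma stackedS h t : stacked h t.+1 = stacked h t ++ new_rows h t.+1.
Proof. by rewrite /stacked -[t.+1]addn1 iotaD map_cat flatten_cat /= cats0 addnC. Qed.

Lemma bofa_RS g h t : bofa_R A g C h t.+1 = bofa_R A g C h t ++ (bofa_out A g C h t.+1).1.
Proof. by rewrite /bofa_R -[t.+1]addn1 iotaD map_cat flatten_cat /= cats0 addnC catA. Qed.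

Lemma level_ge0 h t : 0 <= level h t.
Proof.
elim: t => [|t IH] //=; case: ifP => // _.
by rewrite mulr_ge0 ?gamma2_ge0.
Qed.

Lemma prefix_gamma2_le_level h t : prefix_gamma2 h t <= level h t.
Proof.
case: t => [|t]; first by rewrite /prefix_gamma2 take0 [mx_of_rows _]flatmx0 gamma2_0.
rewrite /=; case: ifPn => [_|]; last by rewrite -leNgt.
by rewrite ler_peMl ?gamma2_ge0 ?ler1n.
Qed.

Lemma prefix_gamma2_mono h : {homo prefix_gamma2 h : s t / (s <= t)%N >-> s <= t}.
Proof.
move=> s t st; rewrite /prefix_gamma2.
have le_size : (size (take s h) <= size (take t h))%N.
  by rewrite !size_take_min leq_min geq_minr andbT (leq_trans (geq_minl _ _)).
pose f i := Ordinal (leq_trans (ltn_ord i) le_size).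
suff -> : mx_of_rows (take s h) = rowsub f (mx_of_rows (take t h)) by exact: gamma2_rowsub_le.
apply/matrixP => i j; have i_s : (i < s)%N.
  by have := ltn_ord i; rewrite [X in (_ < X)%N]size_take_min leq_min => /andP[].
by rewrite !mxE !nth_take // (leq_trans i_s).
Qed.

Lemma level_gt0_restart h t : restart h t.+1 -> 0 < level h t.+1.
Proof.
rewrite /restart /= => lt_g; rewrite lt_g; have := le_lt_trans (level_ge0 h t) lt_g.
by rewrite pmulr_rgt0.
Qed.

Lemma phase_gt0 h t : 0 < level h t -> (0 < phase h t)%N.
Proof.
elim: t => [|t IH]; first by rewrite ltxx.
rewrite levelS /=; case: (restart h t.+1) => [_|/IH]; first by rewrite addn1.
by rewrite addn0.
Qed.

Lemma level_gt0_time h t : 0 < level h t -> (0 < t)%N.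
Proof. by case: t => //; rewrite ltxx. Qed.

Lemma stacked_level0 h t : level h t = 0 -> stacked h t = [::] /\ weight_sqsum h t = 0.
Proof.
elim: t => [|t IH] // level0; rewrite stackedS /=.
have not_restart : ~~ restart h t.+1.
  by apply/negP => /level_gt0_restart; rewrite level0 ltxx.
move: level0; rewrite levelS (negbTE not_restart) => /[dup] level0 /IH[-> ->].
by rewrite /new_rows levelS (negbTE not_restart) level0 eqxx addr0.
Qed.

Lemma level_le h t B : 0 <= B -> (forall s, prefix_gamma2 h s <= B) -> level h t <= 2 * B.
Proof.
move=> B_ge0 prefix_le; elim: t => [|t IH]; first by rewrite mulr_ge0.
by rewrite levelS; case: ifP => _ //; rewrite ler_pM2l.
Qed.

Lemma vnorminf_head_le h s : (0 < s)%N -> (0 < size h)%N ->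
  vnorminf (nth 0 h 0) <= prefix_gamma2 h s.
Proof.
move=> s_gt0 h_gt0; apply: bigmax_le => [|j _]; first exact: gamma2_ge0.
have size_gt0 : (0 < size (take s h))%N by rewrite size_take_min leq_min s_gt0.
by have := gamma2_mx_of_rows_ge_entry j size_gt0; rewrite nth_take.
Qed.

(* A restart at time t sets the level to 2 gamma2(Q_t), which is at least twice
   the previous level and at least 2 q. *)
Lemma pow2_phase_le h t q : 0 <= q -> (forall s, (0 < s)%N -> q <= prefix_gamma2 h s) ->
  2 ^+ phase h t * q <= 2 * Num.max q (level h t).
Proof.
move=> q_ge0 q_le; elim: t => [|t IH].
  rewrite /= expr0 mul1r; have : q <= Num.max q 0 by rewrite le_max lexx.
  lra.
rewrite levelS /=; case: ifPn => [restart_t|_]; last by rewrite addn0.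
have lt_g : level h t < prefix_gamma2 h t.+1 by [].
have max_le : Num.max q (level h t) <= prefix_gamma2 h t.+1.
  by rewrite ge_max q_le ?ltW.
have le_max2 : 2 * prefix_gamma2 h t.+1 <= Num.max q (2 * prefix_gamma2 h t.+1).
  by rewrite le_max lexx orbT.
rewrite addn1 exprS -mulrA ler_pM2l // (le_trans IH) // (le_trans _ le_max2) //.
by rewrite ler_pM2l.
Qed.

Lemma weight_sqsum_ge0 h t : 0 <= weight_sqsum h t.
Proof. by elim: t => [|t IH] //=; rewrite addr_ge0 //; case: ifP; rewrite ?sqr_ge0. Qed.

Lemma pow2_phase_le_ratio h t q G : 0 < q ->
  (forall s, (0 < s)%N -> q <= prefix_gamma2 h s) -> (forall s, prefix_gamma2 h s <= G) ->
  2 ^+ phase h t <= 4 * (G / q).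
Proof.
move=> q_gt0 q_le le_G; have q_le_G : q <= G := le_trans (q_le 1%N isT) (le_G 1%N).
have G_ge0 : 0 <= G := le_trans (ltW q_gt0) q_le_G.
rewrite mulrA ler_pdivlMr // (le_trans (pow2_phase_le _ (ltW q_gt0) q_le)) //.
have : Num.max q (level h t) <= 2 * G by rewrite ge_max level_le // andbT; lra.
lra.
Qed.

Definition doubling_rowalg : rowalg R N :=
  RowAlg [::] (fun p => (new_rows p (size p), coefs p (size p))).

Lemma doubling_rowalg_step h t : (t <= size h)%N ->
  ra_step doubling_rowalg (take t h) = (new_rows h t, coefs h t).
Proof. by move=> th; rewrite /= size_takel // new_rows_take // coefs_take. Qed.

Lemma doubling_rowalg_R h t : (t <= size h)%N -> ra_R doubling_rowalg h t = stacked h t.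
Proof.
move=> th; rewrite /ra_R /stacked [ra_init _]/=; congr flatten; apply/eq_in_map => s.
by rewrite mem_iota add1n ltnS => /andP[_ st]; rewrite doubling_rowalg_step // (leq_trans st).
Qed.

Definition doubling_colalg : colalg R N :=
  ColAlg [::] (fun p => let h := map trmx p in
                        (map trmx (new_rows h (size h)), coefs h (size h))).

Lemma doubling_colalg_step h t : (t <= size h)%N ->
  ca_step doubling_colalg (take t (map trmx h)) = (map trmx (new_rows h t), coefs h t).
Proof.
move=> th; rewrite /= -map_take mapK; last exact: trmxK.
by rewrite size_takel // new_rows_take // coefs_take.
Qed.

Lemma doubling_colalg_L h t : (t <= size h)%N ->
  ca_L doubling_colalg (map trmx h) t = map trmx (stacked h t).
Proof.
move=> th; rewrite /ca_L /stacked [ca_init _]/= map_flatten -map_comp; congr flatten.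
apply/eq_in_map => s; rewrite mem_iota add1n ltnS => /andP[_ st].
by rewrite doubling_colalg_step // (leq_trans st).
Qed.

Definition stacked_invariant h t : Prop :=
  exists2 P, stacked h t = P ++ map ( *:%R (scale h t)) (run_rows h t)
           & forall j, colsq P j <= weight_sqsum h t - scale h t ^+ 2.

Section Run.
Variables (m : nat) (Q : 'M[R]_(m, N)).
Hypothesis solves : forall g, 0 < g -> bofa_solves A g C Q.
Local Notation h := (rows_of Q).

Lemma bofa_step_some g t : 0 < g -> (t <= m)%N -> prefix_gamma2 h t <= g ->
  forall s, (0 < s <= t)%N -> isSome (bofa_step A g C (take s h)).
Proof.
move=> g_gt0 tm prefix_le; elim/ltn_ind => s IH /andP[s_gt0 st].
have earlier s' : (1 <= s' < s)%N -> isSome (bofa_step A g C (take s' h)).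
  by case/andP=> s'_gt0 s's; apply: IH; rewrite // s'_gt0 (leq_trans (ltnW s's)).
have := solves g_gt0 (_ : (1 <= s <= m)%N) earlier; rewrite s_gt0 (leq_trans st) //.
case: (bofa_step A g C (take s h)) => [//|] /(_ isT) gamma2_gt.
have := le_trans (prefix_gamma2_mono h st) prefix_le.
by rewrite /prefix_gamma2 leNgt gamma2_gt.
Qed.

Lemma bofa_out_spec g t : 0 < g -> (0 < t <= m)%N -> prefix_gamma2 h t <= g ->
  [/\ size (bofa_out A g C h t).2 = size (bofa_R A g C h t),
      lincomb_rows (bofa_out A g C h t).2 (bofa_R A g C h t) = nth 0 h t.-1,
      colnorm_rows (bofa_R A g C h t) <= 1 &
      seqnorm2 (bofa_out A g C h t).2 <= C * g].
Proof.
move=> g_gt0 /andP[t_gt0 tm] prefix_le.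
have some_step := bofa_step_some g_gt0 tm prefix_le.
have earlier s : (1 <= s < t)%N -> isSome (bofa_step A g C (take s h)).
  by case/andP=> s_gt0 st; apply: some_step; rewrite s_gt0 ltnW.
have := solves g_gt0 (_ : (1 <= t <= m)%N) earlier; rewrite t_gt0 tm => /(_ isT).
have := some_step t; rewrite t_gt0 leqnn => /(_ isT).
rewrite /bofa_out; case E: (bofa_step A g C (take t h)) => [[x l]|] //= _.
case=> size_l lincomb_l colnorm_R out_le; split => //.
by have := out_le t; rewrite t_gt0 leqnn /bofa_out E => /(_ isT).
Qed.

Lemma solves_C_ge0 : (0 < m)%N -> 0 <= C.
Proof.
move=> m_gt0; set g := prefix_gamma2 h 1 + 1.
have g_gt0 : 0 < g by have := gamma2_ge0 (mx_of_rows (take 1 h)); rewrite /g; lra.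
have g_ge : prefix_gamma2 h 1 <= g by rewrite /g lerDl.
have one_m : (0 < 1 <= m)%N by rewrite m_gt0.
have [_ _ _ out_le] := bofa_out_spec g_gt0 one_m g_ge.
by have := le_trans (seqnorm2_ge0 _) out_le; rewrite pmulr_lge0.
Qed.

Lemma solves_C_le0_eq0 : C <= 0 -> Q = 0.
Proof.
move=> C_le0; apply/row_matrixP => i; rewrite row0 -nth_rows_of.
set g := gamma2 Q + 1; have g_gt0 : 0 < g by have := gamma2_ge0 Q; rewrite /g; lra.
have g_ge : prefix_gamma2 h i.+1 <= g.
  by rewrite (le_trans (gamma2_take_rows_of_le _ _)) // /g lerDl.
have i_m : (0 < i.+1 <= m)%N by rewrite ltn_ord.
have [_ <- _ out_le] := bofa_out_spec g_gt0 i_m g_ge.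
by apply: lincomb_rows_seqnorm2_le0; rewrite (le_trans out_le) // pmulr_lle0.
Qed.

Lemma run_spec t : (0 < t <= m)%N -> 0 < level h t ->
  [/\ size (run_out h t).2 = size (run_rows h t),
      lincomb_rows (run_out h t).2 (run_rows h t) = nth 0 h t.-1,
      colnorm_rows (run_rows h t) <= 1 &
      seqnorm2 (run_out h t).2 <= C * level h t].
Proof. by move=> tm level_gt0; apply: bofa_out_spec => //; exact: prefix_gamma2_le_level. Qed.

Lemma row_eq0_of_level0 t : (0 < t <= m)%N -> level h t = 0 -> nth 0 h t.-1 = 0.
Proof.
move=> /andP[t_gt0 tm] level0; apply/rowP => j; rewrite mxE; apply/eqP.
rewrite -normr_le0 -level0 (le_trans _ (prefix_gamma2_le_level h t)) //.
have it : (t.-1 < size (take t h))%N by rewrite size_takel ?size_rows_of // prednK.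
by have := gamma2_mx_of_rows_ge_entry j it; rewrite nth_take ?prednK.
Qed.

Lemma colsq_stacked_le_of_invariant t : (t <= m)%N ->
  (0 < level h t -> stacked_invariant h t) ->
  forall j, colsq (stacked h t) j <= weight_sqsum h t.
Proof.
move=> tm invariant j; have := level_ge0 h t; rewrite le0r => /orP[/eqP level0|level_gt0].
  by have [-> ->] := stacked_level0 level0; rewrite /colsq big_nil.
have [P -> P_le] := invariant level_gt0.
have tm' : (0 < t <= m)%N by rewrite tm (level_gt0_time level_gt0).
by have [_ _ colnorm_le _] := run_spec tm' level_gt0; exact: colsq_cat_scale_le.
Qed.

Lemma stacked_invariant_holds t : (t <= m)%N -> 0 < level h t -> stacked_invariant h t.
Proof.
elim: t => [|t IH] tm level_gt0; first by rewrite ltxx in level_gt0.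
have bound_t := colsq_stacked_le_of_invariant (ltnW tm) (IH (ltnW tm)).
rewrite /stacked_invariant stackedS /new_rows (gt_eqF level_gt0) /=.
case: ifPn => [restart_t|keep_t].
  by exists (stacked h t) => // j; rewrite addrK bound_t.
have level_eq : level h t.+1 = level h t by rewrite levelS (negbTE keep_t).
have scale_eq : scale h t.+1 = scale h t.
  by rewrite /scale level_eq [phase _ _]/= (negbTE keep_t) addn0.
rewrite level_eq in level_gt0; have [P stacked_eq P_le] := IH (ltnW tm) level_gt0.
exists P; last by move=> j; rewrite addr0 scale_eq.
by rewrite stacked_eq scale_eq -catA -map_cat /run_rows /run_out level_eq bofa_RS.
Qed.

Lemma colsq_stacked_le t j : (t <= m)%N -> colsq (stacked h t) j <= weight_sqsum h t.
Proof.
by move=> tm; apply: colsq_stacked_le_of_invariant => //; exact: stacked_invariant_holds.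
Qed.

Hypothesis weight_gt0 : forall n g, (0 < n)%N -> 0 < g -> 0 < weight n g.

Lemma coefs_spec t : (0 < t <= m)%N ->
  [/\ size (coefs h t) = size (stacked h t),
      lincomb_rows (coefs h t) (stacked h t) = nth 0 h t.-1 &
      seqnorm2 (coefs h t) <= C * level h t / scale h t].
Proof.
move=> tm; have t_le : (t <= m)%N by case/andP: tm.
have := level_ge0 h t; rewrite le0r => /orP[/eqP level0|level_gt0].
  have [stacked0 _] := stacked_level0 level0.
  rewrite /coefs level0 eqxx stacked0 lincomb_rows_nil row_eq0_of_level0 //.
  by rewrite /seqnorm2 big_nil sqrtr0 mulr0 mul0r.
have [P stacked_eq _] := stacked_invariant_holds t_le level_gt0.
have scale_gt0 : 0 < scale h t by apply: weight_gt0 => //; exact: phase_gt0.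
have [size_out lincomb_out _ out_le] := run_spec tm level_gt0.
have -> : coefs h t = nseq (size P) 0 ++ [seq x / scale h t | x <- (run_out h t).2].
  by rewrite /coefs (gt_eqF level_gt0) stacked_eq size_cat size_map addnK.
rewrite stacked_eq !size_cat size_nseq !size_map size_out lincomb_rows_nseq0.
by rewrite lincomb_rows_scale ?gt_eqF // seqnorm2_nseq0_div // ler_pM2r ?invr_gt0.
Qed.

Lemma doubling_rowalg_valid : (forall t, (t <= m)%N -> weight_sqsum h t <= 1) ->
  ra_valid doubling_rowalg Q.
Proof.
move=> sqsum_le1 rows t tm; rewrite {}/rows.
have t_le : (t <= m)%N by case/andP: tm.
rewrite doubling_rowalg_step ?doubling_rowalg_R ?size_rows_of //=.
have [size_c lincomb_c _] := coefs_spec tm; split => //.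
rewrite -sqrtr1; apply: colnorm_rows_le => // j.
exact: le_trans (colsq_stacked_le j t_le) (sqsum_le1 t t_le).
Qed.

Lemma doubling_rowalg_value_le B : 0 <= B ->
  (forall t, (0 < t <= m)%N -> C * level h t / scale h t <= B) ->
  ra_value doubling_rowalg Q <= B.
Proof.
move=> B_ge0 coefs_le; apply: bigmax_le => // t _.
have tm : (0 < t.+1 <= m)%N by rewrite ltn_ord.
rewrite doubling_rowalg_step ?size_rows_of ?ltn_ord //=.
by have [_ _ /le_trans->] := coefs_spec tm; rewrite ?coefs_le.
Qed.

Lemma doubling_colalg_valid : (forall t, (0 < t <= m)%N -> C * level h t <= scale h t) ->
  ca_valid doubling_colalg Q^T.
Proof.
move=> scale_ge cols t tm; rewrite {}/cols.
have t_le : (t <= size h)%N by rewrite size_rows_of; case/andP: tm.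
rewrite cols_of_trmx doubling_colalg_step // doubling_colalg_L //=.
have [size_c lincomb_c coefs_le] := coefs_spec tm; split.
- by rewrite size_map.
- rewrite lincomb_cols_map_trmx lincomb_c (nth_map 0) //.
  by rewrite (leq_trans _ t_le) // prednK; case/andP: tm.
apply: le_trans coefs_le _; have := level_ge0 h t; rewrite le0r => /orP[/eqP ->|level_gt0].
  by rewrite mulr0 mul0r.
have scale_gt0 : 0 < scale h t by apply: weight_gt0 => //; exact: phase_gt0.
by rewrite ler_pdivrMr // mul1r scale_ge.
Qed.

Lemma doubling_colalg_value_le : ca_value doubling_colalg Q^T <= Num.sqrt (weight_sqsum h m).
Proof.
rewrite /ca_value cols_of_trmx doubling_colalg_L ?size_rows_of // rownorm_cols_map_trmx.
apply: colnorm_rows_le => [|j]; first exact: weight_sqsum_ge0.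
exact: colsq_stacked_le.
Qed.

End Run.

End Doubling.

Section Arrival.
Variable R : realType.

Lemma weight_sqsum_phase_weight N a (h : seq 'rV[R]_N) t : 0 <= a ->
  weight_sqsum (fun n _ => phase_weight a n) h t = 1 - decay a (phase h t).+1.
Proof.
move=> a_ge0; elim: t => [|t IH]; first by rewrite /= /decay ln1 mulr0 expR0 subrr.
rewrite weight_sqsumS IH /scale phaseS; case: (restart h t.+1) => /=; last by rewrite addr0 addn0.
by rewrite addn1 phase_weight_sqr //; ring.
Qed.

(* Each restart at least doubles the level, so the squared weights C^2 lev^2
   form a geometric series dominated by 4/3 of its last term. *)
Lemma weight_sqsum_linear N C (h : seq 'rV[R]_N) t :
  weight_sqsum (fun _ g => C * g) h t <= 4 / 3 * (C * level h t) ^+ 2.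
Proof.
elim: t => [|t IH]; first by rewrite /= mulr0 expr0n /= mulr0.
rewrite weight_sqsumS /scale levelS /=; case: ifPn => [restart_t|_]; last by rewrite addr0.
have lt_g : level h t < prefix_gamma2 h t.+1 by [].
have : (C * level h t) ^+ 2 <= (C * prefix_gamma2 h t.+1) ^+ 2.
  by rewrite !exprMn ler_wpM2l ?sqr_ge0 // ler_sqr ?nnegrE ?level_ge0 ?gamma2_ge0 // ltW.
rewrite restart_t.
set x := (C * level h t) ^+ 2 in IH *; set y := (C * prefix_gamma2 h t.+1) ^+ 2.
have -> : (C * (2 * prefix_gamma2 h t.+1)) ^+ 2 = 4 * y by rewrite /y; ring.
lra.
Qed.

Lemma vnorminf_gt0 N (v : 'rV[R]_N) : v != 0 -> 0 < vnorminf v.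
Proof.
case/rV0Pn => j vj_neq0; apply: lt_le_trans (_ : 0 < `|v 0 j|) _.
  by rewrite normr_gt0.
exact: le_bigmax.
Qed.

Definition zero_colalg N : colalg R N := ColAlg [::] (fun _ => ([::], [::])).

Lemma zero_colalg_L N (hc : seq 'cV[R]_N) t : ca_L (zero_colalg N) hc t = [::].
Proof. by rewrite /ca_L /=; elim: (iota 1 t). Qed.

Lemma zero_colalg_valid N m : ca_valid (zero_colalg N) (0 : 'M[R]_(N, m)).
Proof.
move=> t /andP[t_gt0 tm]; rewrite zero_colalg_L.
rewrite /lincomb_cols big_ord0 /seqnorm2 big_nil sqrtr0; split => //.
have i_m : (t.-1 < m)%N by rewrite prednK.
by rewrite /cols_of (nth_map (Ordinal i_m)) ?size_enum_ord // col0.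
Qed.

Lemma zero_colalg_value N m : ca_value (zero_colalg N) (0 : 'M[R]_(N, m)) = 0.
Proof.
rewrite /ca_value zero_colalg_L; apply/le_anti; rewrite bigmax_ge_id andbT.
by apply: bigmax_le => // j _; rewrite big_nil sqrtr0.
Qed.

Definition row_factor c : R := (Num.sqrt (2 * c))^-1 * (3 + (ln 2)^-1) `^ (2^-1 + c).

Lemma row_factor_gt0 c : 0 < c -> 0 < row_factor c.
Proof.
move=> c_gt0; rewrite mulr_gt0 ?invr_gt0 ?sqrtr_gt0 ?mulr_gt0 ?powR_gt0 //.
by rewrite addr_gt0 ?invr_gt0 ?ln_gt0 ?ltr1n.
Qed.

Lemma level_div_phase_weight_le N c C (h : seq 'rV[R]_N) t q G :
  0 < c -> 0 <= C -> 0 < q -> (0 < t)%N ->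
  (forall s, (0 < s)%N -> q <= prefix_gamma2 h s) -> (forall s, prefix_gamma2 h s <= G) ->
  C * level h t / phase_weight (2 * c) (phase h t) <=
  2 * row_factor c * C * G * Num.max 1 (ln (G / q)) `^ (2^-1 + c).
Proof.
move=> c_gt0 C_ge0 q_gt0 t_gt0 q_le le_G.
have q_le_G : q <= G := le_trans (q_le 1%N isT) (le_G 1%N).
have level_gt0 : 0 < level h t.
  exact: lt_le_trans q_gt0 (le_trans (q_le t t_gt0) (prefix_gamma2_le_level h t)).
have ratio_gt0 : 0 < G / q by rewrite divr_gt0 // (lt_le_trans q_gt0 q_le_G).
have := inv_phase_weight_le_log c_gt0 (phase_gt0 level_gt0) ratio_gt0.
move=> /(_ (pow2_phase_le_ratio _ q_gt0 q_le le_G)); rewrite -/(row_factor c) => inv_weight_le.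
have level_le : level h t <= 2 * G by apply: level_le => //; exact: le_trans (ltW q_gt0) q_le_G.
set P := Num.max 1 (ln (G / q)) `^ (2^-1 + c).
rewrite (_ : 2 * _ * C * G * P = C * (2 * G) * (row_factor c * P)).
  rewrite ler_pM ?mulr_ge0 ?level_ge0 ?ler_wpM2l // invr_ge0 ltW //.
  by rewrite phase_weight_gt0 ?mulr_gt0 ?phase_gt0.
by ring.
Qed.

Lemma row_arrival_bound c : 0 < c ->
   exists K : R, 0 < K /\
   forall (N : nat) (C : R) (A : bofa R N), exists B : rowalg R N,
   forall (m : nat) (Q : 'M[R]_(m, N)),
     nth 0 (rows_of Q) 0 != 0 ->
     (forall g : R, 0 < g -> bofa_solves A g C Q) ->
     ra_valid B Q /\
     ra_value B Q <= K * C * gamma2 Q *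
       (Num.max 1 (ln (gamma2 Q / vnorminf (nth 0 (rows_of Q) 0)))) `^ (2^-1 + c).
Proof.
move=> c_gt0; exists (2 * row_factor c); split => [|N C A].
  by rewrite mulr_gt0 ?row_factor_gt0.
exists (doubling_rowalg A C (fun n _ => phase_weight (2 * c) n)) => m Q q1_neq0 solves.
have m_gt0 : (0 < m)%N.
  by move: q1_neq0; rewrite lt0n; apply: contraNneq => m0; rewrite nth_default ?size_rows_of ?m0.
have C_ge0 := solves_C_ge0 solves m_gt0.
have q_le s : (0 < s)%N -> vnorminf (nth 0 (rows_of Q) 0) <= prefix_gamma2 (rows_of Q) s.
  by move=> s_gt0; apply: vnorminf_head_le; rewrite ?size_rows_of.
have weight_gt0 n (g : R) : (0 < n)%N -> 0 < g -> 0 < phase_weight (2 * c) n.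
  by move=> n_gt0 _; apply: phase_weight_gt0; rewrite ?mulr_gt0.
split.
  apply: (doubling_rowalg_valid solves weight_gt0) => t _.
  by rewrite weight_sqsum_phase_weight ?mulr_ge0 ?(ltW c_gt0) // gerBl ltW ?decay_gt0.
apply: (doubling_rowalg_value_le solves weight_gt0) => [|t /andP[t_gt0 _]].
  by rewrite !mulr_ge0 ?powR_ge0 ?gamma2_ge0 ?(ltW (row_factor_gt0 c_gt0)).
apply: level_div_phase_weight_le => //; last exact: gamma2_take_rows_of_le.
exact: vnorminf_gt0.
Qed.

Lemma column_arrival_bound :
   exists K0 : R, 0 < K0 /\
   forall (N : nat) (C : R) (A : bofa R N), exists B : colalg R N,
   forall (m : nat) (Q : 'M[R]_(m, N)),
     (forall g : R, 0 < g -> bofa_solves A g C Q) ->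
     ca_valid B Q^T /\ ca_value B Q^T <= K0 * C * gamma2 Q.
Proof.
exists 3; split => // N C A; have [C_gt0|C_le0] := ltrP 0 C; last first.
  exists (zero_colalg N) => m Q /solves_C_le0_eq0 -> //.
  by rewrite trmx0 zero_colalg_value gamma2_0 mulr0; split; [exact: zero_colalg_valid|].
exists (doubling_colalg A C (fun _ g => C * g)) => m Q solves; split.
  have weight_gt0 n g : (0 < n)%N -> 0 < g -> 0 < C * g by move=> _ g_gt0; rewrite mulr_gt0.
  by apply: (doubling_colalg_valid solves weight_gt0) => t _.
apply: le_trans (doubling_colalg_value_le (fun _ g => C * g) solves) _.
have level_le : level (rows_of Q) m <= 2 * gamma2 Q.
  by apply: level_le; rewrite ?gamma2_ge0 // => s; exact: gamma2_take_rows_of_le.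
have CG_ge0 : 0 <= C * gamma2 Q by rewrite mulr_ge0 ?gamma2_ge0 ?(ltW C_gt0).
apply: le_trans (_ : Num.sqrt ((3 * C * gamma2 Q) ^+ 2) <= _); last first.
  by rewrite sqrtr_sqr ger0_norm // -mulrA mulr_ge0.
rewrite ler_sqrt ?sqr_ge0 //; apply: le_trans (weight_sqsum_linear _ _ _) _.
have : (C * level (rows_of Q) m) ^+ 2 <= (2 * (C * gamma2 Q)) ^+ 2.
  rewrite ler_sqr ?nnegrE ?mulr_ge0 ?level_ge0 ?gamma2_ge0 ?(ltW C_gt0) //.
  by rewrite mulrCA ler_pM2l.
have -> : (3 * C * gamma2 Q) ^+ 2 = 9 * (C * gamma2 Q) ^+ 2 by ring.
have -> : (2 * (C * gamma2 Q)) ^+ 2 = 4 * (C * gamma2 Q) ^+ 2 by ring.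
have := sqr_ge0 (C * gamma2 Q); lra.
Qed.

End Arrival.

Theorem lemma3p1 (R : realType) :
  (forall c : R, 0 < c ->
   exists K : R, 0 < K /\
   forall (N : nat) (C : R) (A : bofa R N), exists B : rowalg R N,
   forall (m : nat) (Q : 'M[R]_(m, N)),
     nth 0 (rows_of Q) 0 != 0 ->
     (forall g : R, 0 < g -> bofa_solves A g C Q) ->
     ra_valid B Q /\
     ra_value B Q <= K * C * gamma2 Q *
       (Num.max 1 (ln (gamma2 Q / vnorminf (nth 0 (rows_of Q) 0))))
         `^ (2^-1 + c))
  /\
  (exists K0 : R, 0 < K0 /\
   forall (N : nat) (C : R) (A : bofa R N), exists B : colalg R N,
   forall (m : nat) (Q : 'M[R]_(m, N)),
     (forall g : R, 0 < g -> bofa_solves A g C Q) ->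
     ca_valid B Q^T /\ ca_value B Q^T <= K0 * C * gamma2 Q).
Proof. by split; [exact: row_arrival_bound | exact: column_arrival_bound]. Qed.
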